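(* At any time during the execution of DASH (described in the context) on an initially connected graph with $n$ nodes, every surviving node $v$ satisfies $\mathrm{rem}(v)\le n$.
   Context: Model: a network is an undirected graph, initially a connected graph $G_0$ on $n$ nodes. In each round an adversary deletes one surviving node $v$ with its incident edges, and then DASH adds edges. $G$ is the current network; $E'$ is the set of healing edges added so far whose endpoints both survive; $G'=(V(G),E')$. $N(u,G)$, $N(u,G')$ are neighbor sets in $G$, $G'$; $\delta(u)=\deg_G(u)-\deg_{G_0}(u)$. DASH: initially every node receives an ID drawn independently and uniformly from $[0,1]$ (its initial ID). When $v$ is deleted (quantities evaluated just before the deletion): partition the nodes of $N(v,G)$ whose current ID differs from that of $v$ into classes of equal current ID; $UN(v,G)$ consists of one node per class, the one with lowest initial ID. Let $S=UN(v,G)\cup N(v,G')$. Order $S$ by increasing $\delta$ and place it in this order into a complete binary tree with $|S|$ positions, filled level by level from the top and left to right; add to the network and to $E'$ the edge between each node of $S$ and the node at its parent position. Then all nodes of the component of $G'$ containing $S$ set their ID to the minimum current ID in $S$. Weights: every node $u$ has weight $w(u)$, initially $1$; when a node $v$ is deleted, $w(v)$ is added to the weight of an arbitrarily chosen node of $N(v,G')$. For a subgraph $H$, $W(H)$ is the sum of the weights of its vertices. For distinct surviving nodes $x,y$, $T(x,y)$ is the connected component of $G'-y$ containing $x$. Define $\mathrm{rem}(v)=\sum_{u\in N(v,G')}W(T(u,v))-\max_{u\in N(v,G')}W(T(u,v))+w(v)$ (the maximum over the empty set being $0$). *)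

From HB Require Import structures.
From mathcomp Require Import all_boot all_order all_algebra.
From mathcomp Require Import reals.
Set Implicit Arguments. Unset Strict Implicit. Unset Printing Implicit Defensive.
Import Order.TTheory GRing.Theory Num.Theory.

Section DASH.
Variables (R : realType) (n : nat).
Local Notation V := ('I_n).
Variable G0 : rel V.
Variable id0 : V -> R.

(* State of the execution. [gadj] = edges of the network G, [hadj] = E'
   (healing edges with both endpoints surviving), [cid] = current IDs,
   [wt] = weights. Edges are only meaningful between alive nodes. *)
Record state := MkState {
  alive : {set V};
  gadj : rel V;
  hadj : rel V;
  cid : V -> R;
  wt : V -> nat }.

Definition restrict (A : {set V}) (e : rel V) : rel V :=
  fun x y => [&& x \in A, y \in A & e x y].

Definition NG (s : state) (u : V) : {set V} := [set x in alive s | gadj s u x].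
Definition NH (s : state) (u : V) : {set V} := [set x in alive s | hadj s u x].

(* UN(v,G): one node per class of equal current ID (different from that of v)
   among N(v,G), namely the one with lowest initial ID. *)
Definition UN (s : state) (v : V) : {set V} :=
  [set u in NG s v | (cid s u != cid s v) &&
     [forall u' in NG s v, (cid s u' == cid s u) ==> (id0 u <= id0 u')%R]].

Definition Sset (s : state) (v : V) : {set V} := UN s v :|: NH s v.

Definition delta (s : state) (u : V) : int :=
  ((#|NG s u|)%:Z - (#|[set x | G0 u x]|)%:Z)%R.

(* edges of the complete binary tree on the sequence [ord]
   (0-indexed positions; the parent of position i > 0 is (i-1)/2) *)
Definition tree_edge (ord : seq V) : rel V := fun x y =>
  [exists i : 'I_(size ord), (0 < i)%N &&
     (((nth x ord i == x) && (nth x ord (i.-1)./2 == y)) ||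
      ((nth x ord i == y) && (nth x ord (i.-1)./2 == x)))].

(* The state after deleting [v], with healing tree built on [ord]
   (an ordering of S by increasing delta), [m] a node of S of minimal current
   ID, and [r] the node receiving the weight of v. *)
Definition next_state (s : state) (v : V) (ord : seq V) (m : V)
    (r : option V) : state :=
  let A' := alive s :\ v in
  let hadj' := restrict A' (fun x y => hadj s x y || tree_edge ord x y) in
  let comp := fun x => [exists u in Sset s v, connect hadj' u x] in
  MkState A'
    (restrict A' (fun x y => gadj s x y || tree_edge ord x y))
    hadj'
    (fun x => if (x \in A') && comp x then cid s m else cid s x)
    (fun x => match r with
              | Some r0 => if x == r0 then (wt s x + wt s v)%N else wt s x
              | None => wt s x end).

Definition init_state : state :=
  MkState [set: V] G0 (fun _ _ => false) id0 (fun _ => 1%N).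

Inductive reachable : state -> Prop :=
| reach_init : reachable init_state
| reach_step (s : state) (v : V) (ord : seq V) (m : V) (r : option V) :
    reachable s ->
    v \in alive s ->
    perm_eq ord (enum (Sset s v)) ->
    sorted (fun a b => delta s a <= delta s b)%R ord ->
    (Sset s v != set0 ->
       m \in Sset s v /\ (forall u, u \in Sset s v -> (cid s m <= cid s u)%R)) ->
    match r with
    | Some r0 => r0 \in NH s v
    | None => NH s v == set0
    end ->
    reachable (next_state s v ord m r).

Definition Tcomp (s : state) (x y : V) : {set V} :=
  [set z in alive s :\ y | connect (restrict (alive s :\ y) (hadj s)) x z].
Definition Wset (s : state) (T : {set V}) : nat := (\sum_(z in T) wt s z)%N.

Definition dash_rem (s : state) (v : V) : nat :=
  ((\sum_(u in NH s v) Wset s (Tcomp s u v))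
   - (\max_(u in NH s v) Wset s (Tcomp s u v)) + wt s v)%N.

End DASH.

From HB Require Import structures.
From mathcomp Require Import all_boot all_order all_algebra.
From mathcomp Require Import reals.
From mathcomp Require Import zify.
Set Implicit Arguments. Unset Strict Implicit. Unset Printing Implicit Defensive.
Import Order.TTheory GRing.Theory Num.Theory.

(* Three properties of a state are invariant along any execution: the healing
   graph G' is a forest, nodes joined in G' carry the same current ID, and the
   surviving nodes carry total weight at most n (weight is only moved, or lost
   together with a deleted node).  The set S used when v is deleted meets each
   component of G' - v at most once: two nodes of UN have different IDs, a node
   of UN differs in ID from v, whose ID is that of all its G'-neighbours, and
   two G'-neighbours of v are separated by v in the forest G'.  A tree spanning
   S therefore keeps G' a forest.  Finally, in a forest the components T(u, v)
   for the G'-neighbours u of v are pairwise disjoint and avoid v, so rem(v) is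
   at most the total surviving weight. *)

Section Forest.
Variable T : finType.
Implicit Types (e : rel T) (a b x y : T).

Definition del_edge e x y : rel T := fun c d =>
  e c d && ~~ (((c == x) && (d == y)) || ((c == y) && (d == x))).

Definition add_edge e a b : rel T := fun c d =>
  [|| e c d, (c == a) && (d == b) | (c == b) && (d == a)].

(* Acyclicity, phrased as: every edge is a bridge. *)
Definition forest e := forall x y, e x y -> ~~ connect (del_edge e x y) x y.

Lemma del_edge_sym e x y : symmetric e -> symmetric (del_edge e x y).
Proof.
move=> sym c d; rewrite /del_edge sym.
by rewrite [(d == x) && _]andbC [(d == y) && _]andbC orbC.
Qed.

Lemma sub_forest e e' : subrel e' e -> forest e -> forest e'.
Proof.
move=> sub fe x y exy; apply: contra (fe x y (sub _ _ exy)).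
apply: connect_sub => c d /andP[e'cd ncd]; apply: connect1.
by rewrite /del_edge (sub _ _ e'cd) ncd.
Qed.

Lemma eq_forest e e' : e =2 e' -> forest e -> forest e'.
Proof. by move=> eqe; apply: sub_forest => x y; rewrite eqe. Qed.

Lemma forest_irrefl e : forest e -> irreflexive e.
Proof. by move=> fe x; apply/negP => /fe; rewrite connect0. Qed.

Lemma connect_isolated e x y :
  (forall z, e x z = false) -> connect e x y -> x = y.
Proof. by move=> ex /connectP[[|z p]] /=; [move=> _ ->|rewrite ex]. Qed.

Lemma connect_sub_stable e e' (Q : pred T) :
  (forall c d, Q c -> e c d -> e' c d && Q d) ->
  forall x y, Q x -> connect e x y -> connect e' x y.
Proof.
move=> stable x y + /connectP[p]; elim: p x => [|z p IHp] x Qx /=.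
  by move=> _ ->.
case/andP=> exz pz yz; case/andP: (stable _ _ Qx exz) => e'xz Qz.
exact: connect_trans (connect1 e'xz) (IHp z Qz pz yz).
Qed.

Lemma connect_add_edge e a b x y : symmetric e ->
  connect (add_edge e a b) x y ->
  [|| connect e x y, connect e x a && connect e b y
    | connect e x b && connect e a y].
Proof.
move=> sym /connectP[p]; have csym := sym_connect_sym sym.
elim: p x => [|z p IHp] x /=; first by move=> _ ->; rewrite connect0.
case/andP=> exz pz yz; have := IHp z pz yz.
case/or3P: exz => [exz|/andP[/eqP-> /eqP->]|/andP[/eqP-> /eqP->]].
- have cxz := connect1 exz.
  case/or3P => [c|/andP[c1 c2]|/andP[c1 c2]].
  + by rewrite (connect_trans cxz c).
  + by rewrite (connect_trans cxz c1) c2 orbT.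
  + by rewrite (connect_trans cxz c1) c2 !orbT.
- case/or3P => [c|/andP[c1 c2]|/andP[c1 c2]].
  + by rewrite connect0 c orbT.
  + by rewrite csym in c1; rewrite (connect_trans c1 c2).
  + by rewrite c2.
- case/or3P => [c|/andP[c1 c2]|/andP[c1 c2]].
  + by rewrite connect0 c !orbT.
  + by rewrite c2.
  + by rewrite csym in c1; rewrite (connect_trans c1 c2).
Qed.

Lemma forest_add_edge e a b : symmetric e -> forest e ->
  ~~ connect e a b -> forest (add_edge e a b).
Proof.
move=> sym fe nab x y; have csym := sym_connect_sym sym.
have del_add u w : subrel (del_edge (add_edge e a b) u w)
                          (add_edge (del_edge e u w) a b).
  move=> c d /andP[/or3P[ecd|ab|ba] ncd]; rewrite /add_edge /del_edge.
  - by rewrite ecd ncd.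
  - by rewrite ab orbT.
  - by rewrite ba !orbT.
have del_connect u w c d : connect (del_edge e u w) c d -> connect e c d.
  by apply: connect_sub => c' d' /andP[ecd _]; apply: connect1.
case/or3P => [exy|/andP[/eqP-> /eqP->]|/andP[/eqP-> /eqP->]].
- apply/negP => /(connect_sub (fun c d cd => connect1 (del_add x y c d cd))).
  case/(connect_add_edge (del_edge_sym x y sym))/or3P.
  + by apply/negP; apply: fe.
  + case/andP=> /del_connect xa /del_connect by_; move: nab.
    rewrite csym in xa; rewrite csym in by_.
    by rewrite (connect_trans xa (connect_trans (connect1 exy) by_)).
  + case/andP=> /del_connect xb /del_connect ay; move: nab.
    have eyx : e y x by rewrite sym.
    by rewrite (connect_trans ay (connect_trans (connect1 eyx) xb)).
- apply: contra nab; apply: connect_sub => c d /andP[/or3P[ecd|cd|cd] ncd].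
  + exact: connect1.
  + by rewrite cd in ncd.
  + by rewrite cd orbT in ncd.
- apply: contra nab; rewrite csym; apply: connect_sub => c d /andP[/or3P[ecd|cd|cd] ncd].
  + exact: connect1.
  + by rewrite cd orbT in ncd.
  + by rewrite cd in ncd.
Qed.

End Forest.

Section BinaryTree.
Variable T : eqType.
Implicit Types (d x y : T) (s : seq T).

Lemma parent_lt j : 0 < j -> (j.-1)./2 < j.
Proof. by move=> j_gt0; rewrite ltn_half_double -addnn; lia. Qed.

Lemma parent_le j : (j.-1)./2 <= j.
Proof. by case: j => // j; apply/ltnW/parent_lt. Qed.

(* [tree_edge] with a fixed default element for [nth] instead of the endpoint. *)
Definition btree_edge_at d s i x y :=
  ((nth d s i == x) && (nth d s (i.-1)./2 == y)) ||
  ((nth d s i == y) && (nth d s (i.-1)./2 == x)).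

Definition btree_edge d s x y :=
  [exists i : 'I_(size s), (0 < i) && btree_edge_at d s i x y].

Lemma btree_edge_atC d s i x y : btree_edge_at d s i x y = btree_edge_at d s i y x.
Proof. by rewrite /btree_edge_at orbC. Qed.

Lemma btree_edge_sym d s : symmetric (btree_edge d s).
Proof. by move=> x y; apply: eq_existsb => i; rewrite btree_edge_atC. Qed.

Lemma btree_edge_mem d s x y : btree_edge d s x y -> (x \in s) && (y \in s).
Proof.
case/existsP=> i /andP[_ ei]; have lti := ltn_ord i.
have ltp : (i.-1)./2 < size s by apply: leq_ltn_trans (parent_le i) lti.
by case/orP: ei => /andP[/eqP<- /eqP<-]; rewrite !mem_nth.
Qed.

End BinaryTree.

Section ForestUnionBinaryTree.
Variables (T : finType) (e : rel T) (d : T) (s : seq T).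
Hypotheses (e_sym : symmetric e) (e_forest : forest e) (s_uniq : uniq s).
Hypothesis s_separated : forall x y, x \in s -> y \in s -> x != y -> ~~ connect e x y.

Local Notation k := (size s).
Local Notation a := (nth d s).

Definition btree_prefix j : rel T := fun x y =>
  [exists i : 'I_k, [&& 0 < i, i < j & btree_edge_at d s i x y]].

Local Notation E j := (relU e (btree_prefix j)).

Lemma nth_separated i j : i < k -> j < k -> i != j -> ~~ connect e (a i) (a j).
Proof. by move=> ik jk ij; apply: s_separated; rewrite ?mem_nth // nth_uniq. Qed.

Lemma btree_prefix_le1 j x y : j <= 1 -> btree_prefix j x y = false.
Proof.
move=> j_le1; apply/existsP => -[i /and3P[i_gt0 ij _]].
by move: (leq_trans ij j_le1); rewrite ltnS leqNgt i_gt0.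
Qed.

Lemma btree_prefix_size : btree_prefix k =2 btree_edge d s.
Proof. by move=> x y; apply: eq_existsb => i; rewrite ltn_ord. Qed.

Lemma btree_prefixS j : 0 < j -> j < k -> E j.+1 =2 add_edge (E j) (a j) (a (j.-1)./2).
Proof.
move=> j_gt0 jk x y; rewrite /= /add_edge -orbA; congr (_ || _).
apply/existsP/idP.
- case=> i /and3P[i_gt0]; rewrite ltnS leq_eqVlt => /orP[/eqP ij|ij] ei.
    move: ei; rewrite /btree_edge_at ij.
    by case/orP => /andP[/eqP-> /eqP->]; rewrite !eqxx ?orbT.
  by apply/orP; left; apply/existsP; exists i; rewrite i_gt0 ij.
- case/or3P => [/existsP[i /and3P[i_gt0 ij ei]]|/andP[/eqP-> /eqP->]|/andP[/eqP-> /eqP->]].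
  + by exists i; rewrite i_gt0 ei ltnS (ltnW ij).
  + by exists (Ordinal jk); rewrite j_gt0 ltnSn /btree_edge_at /= !eqxx.
  + by exists (Ordinal jk); rewrite j_gt0 ltnSn /btree_edge_at /= !eqxx orbT.
Qed.

(* From a_j, the edges added so far cannot be used: they only touch the
   e-components of a_0, ..., a_(j-1), which a_j does not meet. *)
Lemma connect_prefix_from_nth j z : j < k -> connect (E j) (a j) z -> connect e (a j) z.
Proof.
move=> jk; pose Q z := ~~ [exists i : 'I_k, (i < j) && connect e (a i) z].
apply: (@connect_sub_stable _ _ _ Q); last first.
  apply/existsP => -[i /andP[ij]]; apply/negP.
  by apply: nth_separated (ltn_ord i) jk _; rewrite ltn_eqF.
move=> c c' Qc /orP[ecc'|/existsP[i /and3P[i_gt0 ij ei]]].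
  rewrite ecc' /=; apply: contra Qc => /existsP[i /andP[ij ci]].
  by apply/existsP; exists i; rewrite ij (connect_trans ci) // connect1 // e_sym.
have pk : (i.-1)./2 < k by apply: leq_ltn_trans (parent_le i) (ltn_ord i).
have pj : (i.-1)./2 < j by apply: ltn_trans (parent_lt i_gt0) ij.
move: Qc; case/orP: ei => /andP[/eqP<- /eqP<-] /existsP[].
  by exists i; rewrite ij connect0.
by exists (Ordinal pk); rewrite pj connect0.
Qed.

Lemma forest_btree_prefix j : j <= k -> forest (E j).
Proof.
elim: j => [_|j IHj jk].
  by apply: eq_forest e_forest => x y; rewrite /= btree_prefix_le1 ?orbF.
have Ej := IHj (ltnW jk); case: (posnP j) => [j0|j_gt0].
  by apply: eq_forest Ej => x y; rewrite /= !btree_prefix_le1 // j0.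
have pj := parent_lt j_gt0.
apply: (eq_forest (fun x y => esym (btree_prefixS j_gt0 jk x y))).
apply: forest_add_edge => //.
  by move=> x y; rewrite /= e_sym; congr (_ || _); apply: eq_existsb => i;
    rewrite btree_edge_atC.
apply: contra (nth_separated jk (ltn_trans pj jk) (negbT (gtn_eqF pj))).
exact: connect_prefix_from_nth.
Qed.

Lemma forest_union_btree : forest (relU e (btree_edge d s)).
Proof.
apply: eq_forest (forest_btree_prefix (leqnn k)) => x y.
by rewrite /= btree_prefix_size.
Qed.

End ForestUnionBinaryTree.

Section Dash.
Variables (R : realType) (n : nat) (id0 : 'I_n -> R).
Implicit Types (s : state R n) (A : {set 'I_n}) (e : rel 'I_n) (u v x y : 'I_n).

Lemma tree_edgeE (d : 'I_n) (s : seq 'I_n) x y :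
  tree_edge s x y = btree_edge d s x y.
Proof.
apply: eq_existsb => i; have lti := ltn_ord i.
have ltp : (i.-1)./2 < size s by apply: leq_ltn_trans (parent_le i) lti.
by rewrite /btree_edge_at (set_nth_default d x lti) (set_nth_default d x ltp).
Qed.

Lemma restrict_sym A e : symmetric e -> symmetric (restrict A e).
Proof. by move=> sym x y; rewrite /restrict sym andbCA. Qed.

Lemma restrict_sub A e : subrel (restrict A e) e.
Proof. by move=> x y /and3P[]. Qed.

Lemma forest_neighbours_separated A e v u1 u2 : symmetric e -> forest e ->
  e v u1 -> e v u2 -> u1 != u2 -> ~~ connect (restrict (A :\ v) e) u1 u2.
Proof.
move=> sym fe evu1 evu2 u12; apply/negP => c12.
have vu1 : v != u1 by apply: contraTneq evu1 => <-; rewrite forest_irrefl.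
rewrite (sym_connect_sym (restrict_sym _ sym)) in c12.
have c21 : connect (del_edge e v u1) u2 u1.
  apply: connect_sub c12 => c c' /and3P[cA c'A ecc']; apply: connect1.
  move: cA c'A; rewrite !inE => /andP[cv _] /andP[c'v _].
  by rewrite /del_edge ecc' (negbTE cv) (negbTE c'v) /= andbF.
have evu2' : del_edge e v u1 v u2.
  by rewrite /del_edge evu2 eqxx eq_sym (negbTE u12) (negbTE vu1).
by move: (fe v u1 evu1); rewrite (connect_trans (connect1 evu2') c21).
Qed.

Definition dash_invariant s :=
  [/\ symmetric (hadj s), forest (hadj s),
      (forall x y, connect (hadj s) x y -> cid s x = cid s y) &
      (\sum_(x in alive s) wt s x <= n)%N].

Lemma dash_invariant_init (G0 : rel 'I_n) : dash_invariant (init_state G0 id0).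
Proof.
split=> //=; first by move=> x y /connect_isolated ->.
by rewrite sum_nat_const cardsT card_ord muln1.
Qed.

Lemma Tcomp_disjoint s v u1 u2 z : symmetric (hadj s) -> forest (hadj s) ->
  u1 \in NH s v -> u2 \in NH s v -> u1 != u2 ->
  z \in Tcomp s u1 v -> z \notin Tcomp s u2 v.
Proof.
move=> sym fe; rewrite !inE => /andP[_ h1] /andP[_ h2] u12 /andP[_ c1].
apply/negP => /andP[_ c2]; move: (forest_neighbours_separated (alive s) sym fe h1 h2 u12).
by rewrite (connect_trans c1) // (sym_connect_sym (restrict_sym _ sym)).
Qed.

Lemma dash_rem_le_weight s v : symmetric (hadj s) -> forest (hadj s) ->
  v \in alive s -> (dash_rem s v <= \sum_(x in alive s) wt s x)%N.
Proof.
move=> sym fe vA; rewrite /dash_rem.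
apply: leq_trans (leq_add (leq_subr _ _) (leqnn _)) _.
rewrite (big_setD1 v vA) addnC leq_add2l /Wset.
under eq_bigr => u _ do rewrite big_mkcond.
rewrite exchange_big /= [X in (_ <= X)%N]big_mkcond /=; apply: leq_sum => z _.
case: (pickP (fun u => (u \in NH s v) && (z \in Tcomp s u v))) => [u0 /andP[u0N zT]|none].
- have zA : z \in alive s :\ v by move: zT; rewrite inE => /andP[].
  rewrite zA (bigD1 u0) //= zT big1 ?addn0 // => u /andP[uN uu0].
  by rewrite (negbTE (Tcomp_disjoint sym fe u0N uN _ zT)) // eq_sym.
- by rewrite big1 //= => u uN; have := none u; rewrite uN /= => ->.
Qed.

Lemma Sset_alive s v x : forest (hadj s) ->
  x \in Sset id0 s v -> x \in alive s :\ v.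
Proof.
move=> fe; rewrite in_setU !inE => /orP[/and3P[/andP[xA _] ncid _]|/andP[xA hvx]].
- by rewrite xA andbT; apply: contraNneq ncid => ->.
- by rewrite xA andbT; apply: contraTneq hvx => ->; rewrite forest_irrefl.
Qed.

Lemma Sset_separated s v x y : injective id0 -> dash_invariant s ->
  x \in Sset id0 s v -> y \in Sset id0 s v -> x != y ->
  ~~ connect (restrict (alive s :\ v) (hadj s)) x y.
Proof.
move=> id0_inj [sym fe cidE _] xS yS xy; apply/negP => cxy.
have cid_xy : cid s x = cid s y.
  by apply: cidE; apply: connect_sub cxy => c c' /restrict_sub/connect1.
have cid_NH w : w \in NH s v -> cid s v = cid s w.
  by rewrite inE => /andP[_ hvw]; apply: cidE; apply: connect1.
move: xS yS; rewrite !in_setU => /orP[xU|xN] /orP[yU|yN].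
- move: xU yU; rewrite !inE => /and3P[xNG _ /forall_inP minx] /and3P[yNG _ /forall_inP miny].
  have xNG' : x \in NG s v by rewrite /NG inE.
  have yNG' : y \in NG s v by rewrite /NG inE.
  have := implyP (minx y yNG'); have := implyP (miny x xNG').
  rewrite cid_xy eqxx => /(_ isT) leyx /(_ isT) lexy.
  have /id0_inj exy : id0 x = id0 y by apply: le_anti; rewrite lexy leyx.
  by rewrite exy eqxx in xy.
- by move: xU; rewrite inE cid_xy -(cid_NH _ yN) eqxx andbF.
- by move: yU; rewrite inE -cid_xy -(cid_NH _ xN) eqxx andbF.
- move: xN yN; rewrite !inE => /andP[_ hvx] /andP[_ hvy].
  by move: (forest_neighbours_separated (alive s) sym fe hvx hvy xy); rewrite cxy.
Qed.

Section Step.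
Variables (s : state R n) (v : 'I_n) (ord : seq 'I_n) (m : 'I_n) (r : option 'I_n).
Hypotheses (id0_inj : injective id0) (inv : dash_invariant s) (vA : v \in alive s).
Hypothesis ord_S : perm_eq ord (enum (Sset id0 s v)).

Local Notation S := (Sset id0 s v).
Local Notation A' := (alive s :\ v).
Local Notation s' := (next_state id0 s v ord m r).

Lemma mem_ord x : (x \in ord) = (x \in S).
Proof. by rewrite (perm_mem ord_S) mem_enum. Qed.

Lemma next_hadjE : hadj s' =2 relU (restrict A' (hadj s)) (btree_edge v ord).
Proof.
have [_ hforest _ _] := inv; move=> x y; rewrite /= /restrict (tree_edgeE v) /=.
case exy: (btree_edge v ord x y); last by rewrite !orbF.
move/btree_edge_mem: exy; rewrite !mem_ord.
by case/andP=> /(Sset_alive hforest) -> /(Sset_alive hforest) ->; rewrite !orbT.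
Qed.

Lemma next_hadj_sym : symmetric (hadj s').
Proof.
have [hsym _ _ _] := inv.
by move=> x y; rewrite !next_hadjE /= (restrict_sym _ hsym) btree_edge_sym.
Qed.

Lemma next_hadj_forest : forest (hadj s').
Proof.
have [hsym hforest _ _] := inv.
apply: (eq_forest (fun x y => esym (next_hadjE x y))).
apply: forest_union_btree.
- exact: restrict_sym.
- exact: sub_forest (@restrict_sub _ _) hforest.
- by rewrite (perm_uniq ord_S) enum_uniq.
- by move=> x y; rewrite !mem_ord; apply: Sset_separated.
Qed.

(* A G'-component of the new state either meets S, and then all of it gets the
   new ID, or it avoids the new tree edges and is (part of) an old one. *)
Lemma next_cid_connect x y : connect (hadj s') x y -> cid s' x = cid s' y.
Proof.
have [hsym _ cidE _] := inv.
move=> cxy; pose P z := [exists u in S, connect (hadj s') u z].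
have csym := sym_connect_sym next_hadj_sym.
have isolated z : z \notin A' -> forall w, hadj s' z w = false.
  by move=> zA w; rewrite /= /restrict (negbTE zA).
have [xA|xA] := boolP (x \in A'); last by rewrite (connect_isolated (isolated x xA) cxy).
have [yA|yA] := boolP (y \in A'); last first.
  by rewrite csym in cxy; rewrite (connect_isolated (isolated y yA) cxy).
have Pxy : P x = P y.
  apply/exists_inP/exists_inP => -[u uS cu]; exists u => //.
    exact: connect_trans cu cxy.
  by apply: connect_trans cu _; rewrite csym.
have cid'E z : cid s' z = if (z \in A') && P z then cid s m else cid s z := erefl.
rewrite !cid'E xA yA /= -Pxy; case: ifP => // nPx.
apply: cidE.
apply: (@connect_sub_stable _ (hadj s') (hadj s) (predC P)) cxy; last by rewrite /= nPx.
move=> c c' nPc; rewrite /= in nPc; rewrite next_hadjE => /orP[/and3P[cA c'A hcc']|tcc'].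
  rewrite hcc' /=; apply: contra nPc => /exists_inP[u uS cu]; apply/exists_inP.
  exists u => //; apply: connect_trans cu (connect1 _).
  by rewrite next_hadjE /= /restrict cA c'A hsym hcc'.
move: (btree_edge_mem tcc'); rewrite mem_ord => /andP[cS _].
by case/negP: nPc; apply/exists_inP; exists c; rewrite ?connect0.
Qed.

Lemma next_weight_le :
  match r with Some r0 => r0 \in NH s v | None => NH s v == set0 end ->
  (\sum_(x in alive s') wt s' x <= \sum_(x in alive s) wt s x)%N.
Proof.
have [_ hforest _ _] := inv.
rewrite (big_setD1 v vA) /=; case: r => [r0 r0N|_]; last exact: leq_addl.
have r0A : r0 \in A' by apply: (Sset_alive hforest); rewrite in_setU r0N orbT.
rewrite (big_setD1 r0 r0A) /= (big_setD1 r0 r0A) /= eqxx addnCA addnA leq_add2l.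
by apply/eq_leq/eq_bigr => x; rewrite !inE => /andP[/negbTE -> _].
Qed.

End Step.

End Dash.

Theorem lemma5 (R : realType) (n : nat) (G0 : rel 'I_n) (id0 : 'I_n -> R) :
  symmetric G0 -> irreflexive G0 -> (forall x y, connect G0 x y) ->
  injective id0 -> (forall x, (0 <= id0 x <= 1)%R) ->
  forall s : state R n, reachable G0 id0 s ->
  forall v : 'I_n, v \in alive s -> (dash_rem s v <= n)%N.
Proof.
move=> _ _ _ id0_inj _ s reach_s.
have [hsym hforest _ wsum] : dash_invariant s.
  elim: reach_s => [|s0 v0 ord m r _ inv v0A ord_S _ _ r_ok];
    first exact: dash_invariant_init.
  split; [exact: next_hadj_sym|exact: next_hadj_forest|exact: next_cid_connect|].
  have [_ _ _ wsum0] := inv.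
  exact: leq_trans (next_weight_le id0 ord m inv v0A r_ok) wsum0.
move=> v vA; exact: leq_trans (dash_rem_le_weight hsym hforest vA) wsum.
Qed.
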